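(* Let $f:\{0,\dots,r-1\}^n\to\mathbb{R}$ be an $r$-valued fitness function with a weak preference for $r-1$ at position $i\in\{1,\dots,n\}$. Consider the $r$-cGA optimizing $f$ with parameter $K$. Then for every $T\in\mathbb{N}$, \[\Pr\left[\min_{t\in\{0,\dots,T\}} p^{(t)}_{i,r-1}\leq p^{(0)}_{i,r-1}-\frac{1}{2r}\right]\leq 2\exp\left(-\frac{K^2}{8Tr^2}\right).\]
   Context: Let $n\geq 1$, $r\geq 2$ be integers and $K>0$. The $r$-cGA maximizing $f$ maintains frequencies $p^{(t)}_{i,j}$ ($i\in\{1,\dots,n\}$, $j\in\{0,\dots,r-1\}$), initialized to $p^{(0)}_{i,j}=1/r$. In iteration $t$ it samples $x,y\in\{0,\dots,r-1\}^n$ independently, each position $i$ independently with $\Pr[x_i=j]=p^{(t)}_{i,j}$; if $f(x)<f(y)$ it swaps $x$ and $y$; then it sets $p^{(t+1)}_{i,j}=p^{(t)}_{i,j}+\frac1K(\mathbf{1}[x_i=j]-\mathbf{1}[y_i=j])$ for all $i,j$, with no margins. It is assumed that $1/r$ is an integer multiple of $1/K$. The function $f$ has a weak preference for value $j$ at position $i$ if for all $x\in\{0,\dots,r-1\}^n$, $f(x_1,\dots,x_i,\dots,x_n)\leq f(x_1,\dots,x_{i-1},j,x_{i+1},\dots,x_n)$. *)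

From mathcomp Require Import all_boot all_order all_algebra.
From mathcomp Require Import reals sequences exp.
Set Implicit Arguments. Unset Strict Implicit. Unset Printing Implicit Defensive.
Import Order.TTheory GRing.Theory Num.Theory.
Local Open Scope ring_scope.

(* Search points: {0,...,r-1}^n, positions 'I_n (0-based), values 'I_r. *)
Definition point (n r : nat) := {ffun 'I_n -> 'I_r}.

Definition freqs (R : realType) (n r : nat) := 'I_n -> 'I_r -> R.

Definition setpos n r (x : point n r) (i : 'I_n) (j : 'I_r) : point n r :=
  [ffun k => if k == i then j else x k].

Definition weak_pref (R : realType) n r (f : point n r -> R) (i : 'I_n) (j : 'I_r) :=
  forall x : point n r, f x <= f (setpos x i j).

Definition sample_prob (R : realType) n r (p : freqs R n r) (x : point n r) : R :=
  \prod_(k < n) p k (x k).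

Definition cga_step (R : realType) n r (f : point n r -> R) (K : R)
    (p : freqs R n r) (xy : point n r * point n r) : freqs R n r :=
  let: (x, y) := if f xy.1 < f xy.2 then (xy.2, xy.1) else xy in
  fun k j => p k j + K^-1 * ((x k == j)%:R - (y k == j)%:R).

Definition init_freqs (R : realType) n r : freqs R n r := fun _ _ => (r%:R)^-1.

(* frequencies p^{(t)} along a run whose first T sample pairs are s *)
Fixpoint cga_traj (R : realType) n r (f : point n r -> R) (K : R) (T : nat)
    (s : {ffun 'I_T -> point n r * point n r}) (t : nat) : freqs R n r :=
  match t with
  | 0 => @init_freqs R n r
  | t'.+1 =>
      match insub t' : option 'I_T with
      | Some k => cga_step f K (@cga_traj R n r f K T s t') (s k)
      | None => @cga_traj R n r f K T s t'
      end
  end.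

Definition run_prob (R : realType) n r (f : point n r -> R) (K : R) (T : nat)
    (s : {ffun 'I_T -> point n r * point n r}) : R :=
  \prod_(k < T) (sample_prob (cga_traj f K s k) (s k).1
                 * sample_prob (cga_traj f K s k) (s k).2).

Definition cga_Pr (R : realType) n r (f : point n r -> R) (K : R) (T : nat)
    (E : pred {ffun 'I_T -> point n r * point n r}) : R :=
  \sum_(s | E s) run_prob f K s.

(* Write g_t in {-1, 0, 1} for K times the change of p_{i,j} in iteration t, j = jtop.
   Exchanging the i-th entries of the two samples preserves the probability of the
   pair and, by the weak preference for j, maps every pair with g = -1 to one with
   g = +1; hence E[g_t | past] >= 0.  For g in {-1, 0, 1} with E g >= 0 one has
   E exp(-x g) <= cosh x <= exp(x^2/2), so exp(lam (p^(0) - p^(t))) exp(-t lam^2/(2K^2))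
   is a supermartingale, and stays one when frozen at the first drop by a = 1/(2r).
   Markov's inequality at time T with lam = a K^2/T bounds the probability of a drop
   by exp(-a^2 K^2/(2T)) = exp(-K^2/(8 T r^2)).  Since there are no margins, the
   nonnegativity of the frequencies has to be derived: they stay multiples of 1/K. *)

From mathcomp Require Import all_boot all_order all_algebra.
From mathcomp Require Import reals sequences exp.
From mathcomp Require Import ring lra.
From mathcomp Require classical_sets topology normedtype derive realfun.
Set Implicit Arguments. Unset Strict Implicit. Unset Printing Implicit Defensive.
Import Order.TTheory GRing.Theory Num.Theory.
Local Open Scope ring_scope.

Section Hyperbolic.
Import classical_sets topology normedtype derive realfun numFieldNormedType.Exports.
Variable R : realType.
Implicit Types x : R.

Definition cosh x := (expR x + expR (- x)) / 2.
Definition sinh x := (expR x - expR (- x)) / 2.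

Lemma sinh_ge0 x : 0 <= x -> 0 <= sinh x.
Proof. by move=> x_ge0; rewrite divr_ge0 // subr_ge0 ler_expR; lra. Qed.

Lemma cosh_ge1 x : 1 <= cosh x.
Proof. by rewrite /cosh; have := expR_ge1Dx x; have := expR_ge1Dx (- x); lra. Qed.

Lemma coshN x : cosh (- x) = cosh x.
Proof. by rewrite /cosh opprK addrC. Qed.

Lemma derive_ge0_ler (F dF : R -> R) a :
  (forall x, is_derive x 1 F (dF x)) -> (forall x, a <= x -> 0 <= dF x) ->
  forall x, a <= x -> F a <= F x.
Proof.
move=> F_dF dF_ge0 x a_le_x.
apply: (@ger0_derive1_ndecry R F a _ _ _ a x (lexx a) a_le_x).
- by move=> y _; case: (F_dF y).
- move=> y; rewrite in_itv /= andbT => /ltW a_le_y.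
  by rewrite derive1E derive_val; apply: dF_ge0.
- apply: continuous_subspaceT => y.
  by apply/differentiable_continuous/derivable1_diffP; case: (F_dF y).
Qed.

Lemma sinh_le_mulr_cosh x : 0 <= x -> sinh x <= x * cosh x.
Proof.
move=> x_ge0; rewrite -subr_ge0.
have := @derive_ge0_ler (fun y => y * cosh y - sinh y) (fun y => y * sinh y) 0.
rewrite /cosh /sinh /= mul0r oppr0 expR0 subrr mul0r subr0; apply => //.
- by move=> y; apply: trigger_derive; rewrite /GRing.scale /=; field.
- by move=> y y_ge0; rewrite mulr_ge0 // sinh_ge0.
Qed.

(* (cosh x) exp(-x^2/2) is nonincreasing on [0, +oo[ since tanh x <= x. *)
Lemma cosh_le_expR_sqr x : cosh x <= expR (x ^+ 2 / 2).
Proof.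
wlog x_ge0 : x / 0 <= x.
  move=> le_x; have [/le_x//|/ltW] := lerP 0 x.
  by rewrite -oppr_ge0 => /le_x; rewrite coshN sqrrN.
pose E (y : R) := expR (- (y ^+ 2 / 2)).
have cosh0E0 : cosh 0 * E 0 = 1.
  by rewrite /cosh /E oppr0 expr0n /= mul0r oppr0 expR0; field.
have : cosh x * E x <= 1.
  rewrite -cosh0E0 -lerN2.
  apply: (@derive_ge0_ler (fun y => - (cosh y * E y))
    (fun y => (y * cosh y - sinh y) * E y)) x_ge0 => [y|y y_ge0].
  - by apply: trigger_derive; rewrite /GRing.scale /cosh /sinh /E /=; field.
  - by rewrite mulr_ge0 ?subr_ge0 ?sinh_le_mulr_cosh ?expR_ge0.
by rewrite /E expRN mulrC -ler_pdivlMl ?invr_gt0 ?expR_gt0 // invrK mulr1.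
Qed.

Lemma expR_sign_le (b1 b2 : bool) x :
  expR (- (x * (b1%:R - b2%:R))) <= cosh x - (b1%:R - b2%:R) * sinh x.
Proof.
have := cosh_ge1 x; rewrite /cosh /sinh.
by case: b1; case: b2;
  rewrite ?(mulr1n, mulr0n, subrr, subr0, sub0r, mulr0, mulr1, mulrN1, opprK, oppr0, expR0); lra.
Qed.
End Hyperbolic.

Section Sampling.
Variables (R : realType) (n r : nat).
Implicit Types (q : freqs R n r) (x : point n r).
Local Notation samples := (point n r * point n r)%type.

Definition pair_prob q (z : samples) := sample_prob q z.1 * sample_prob q z.2.

Lemma sample_prob_ge0 q x : (forall k j, 0 <= q k j) -> 0 <= sample_prob q x.
Proof. by move=> q_ge0; apply: prodr_ge0 => k _. Qed.

Lemma pair_prob_ge0 q z : (forall k j, 0 <= q k j) -> 0 <= pair_prob q z.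
Proof. by move=> q_ge0; rewrite mulr_ge0 ?sample_prob_ge0. Qed.

Lemma sum_sample_prob q : (forall k, \sum_j q k j = 1) ->
  \sum_x sample_prob q x = 1.
Proof.
move=> q_sum1; rewrite /sample_prob -(bigA_distr_bigA (fun k j => q k j)) /=.
by rewrite big1 // => k _; rewrite q_sum1.
Qed.

Lemma sum_pair_prob q : (forall k, \sum_j q k j = 1) ->
  \sum_(z : samples) pair_prob q z = 1.
Proof.
move=> q_sum1; rewrite -(pair_bigA _ (fun x y => sample_prob q x * sample_prob q y)) /=.
under eq_bigr do rewrite -mulr_sumr sum_sample_prob // mulr1.
exact: sum_sample_prob.
Qed.

Lemma sample_prob_neq0 q x k : sample_prob q x != 0 -> q k (x k) != 0.
Proof.
by rewrite /sample_prob prodf_seq_neq0 => /allP; apply; rewrite mem_index_enum.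
Qed.

End Sampling.

Section Runs.
Variables (R : realType) (n r : nat) (K : R) (f : point n r -> R).
Local Notation samples := (point n r * point n r)%type.
Local Notation run T := {ffun 'I_T -> samples}.

Definition extend_run T (s : run T) (z : samples) : run T.+1 :=
  [ffun k => if unlift ord_max k is Some k' then s k' else z].

Definition restrict_run T (s : run T.+1) : run T := [ffun k => s (lift ord_max k)].

Lemma extend_run_lift T (s : run T) z k : extend_run s z (lift ord_max k) = s k.
Proof. by rewrite ffunE liftK. Qed.

Lemma extend_run_max T (s : run T) z : extend_run s z ord_max = z.
Proof. by rewrite ffunE unlift_none. Qed.

Lemma restrict_extend_run T (s : run T) z : restrict_run (extend_run s z) = s.
Proof. by apply/ffunP => k; rewrite ffunE extend_run_lift. Qed.

Lemma extend_restrict_run T (s : run T.+1) : extend_run (restrict_run s) (s ord_max) = s.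
Proof. by apply/ffunP => k; rewrite ffunE; case: unliftP => [j ->|->] //; rewrite ffunE. Qed.

Lemma sum_run_succ T (F : run T.+1 -> R) :
  \sum_(s : run T.+1) F s = \sum_(s : run T) \sum_(z : samples) F (extend_run s z).
Proof.
rewrite pair_bigA (reindex (fun p : run T * samples => extend_run p.1 p.2)) //=.
exists (fun s => (restrict_run s, s ord_max)) => [[s z] _|s _] /=.
  by rewrite restrict_extend_run extend_run_max.
by rewrite extend_restrict_run.
Qed.

Lemma cga_traj_extend T (s : run T) z t : (t <= T)%N ->
  cga_traj f K (extend_run s z) t = cga_traj f K s t.
Proof.
elim: t => [|t IH] lt_tT //=; rewrite IH ?(ltnW lt_tT) //.
case: insubP => [k1 _ k1E|]; last by rewrite ltnS (ltnW lt_tT).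
case: insubP => [k2 _ k2E|]; last by rewrite lt_tT.
have -> : k1 = lift ord_max k2 by apply: val_inj; rewrite /= /bump leqNgt ltn_ord k1E k2E.
by rewrite extend_run_lift.
Qed.

Lemma cga_traj_extend_last T (s : run T) z :
  cga_traj f K (extend_run s z) T.+1 = cga_step f K (cga_traj f K s T) z.
Proof.
rewrite /= cga_traj_extend //.
case: insubP => [k _ kE|]; last by rewrite ltnSn.
have -> : k = ord_max by apply: val_inj.
by rewrite extend_run_max.
Qed.

Lemma run_prob_extend T (s : run T) z :
  run_prob f K (extend_run s z) = run_prob f K s * pair_prob (cga_traj f K s T) z.
Proof.
rewrite /run_prob big_ord_recr /= cga_traj_extend // extend_run_max; congr (_ * _).
apply: eq_bigr => k _.
have -> : widen_ord (leqnSn T) k = lift ord_max k.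
  by apply: val_inj; rewrite /= /bump leqNgt ltn_ord.
by rewrite extend_run_lift cga_traj_extend // ltnW.
Qed.

End Runs.

Section Reachable.
Variables (R : realType) (n r : nat) (K : R) (f : point n r -> R).
Hypothesis K_gt0 : 0 < K.
Local Notation samples := (point n r * point n r)%type.
Local Notation run T := {ffun 'I_T -> samples}.
Implicit Types q : freqs R n r.

Definition valid_freqs q :=
  (forall k j, exists N : nat, q k j = N%:R / K) /\ (forall k, \sum_j q k j = 1).

Lemma valid_freqs_ge0 q : valid_freqs q -> forall k j, 0 <= q k j.
Proof. by move=> [q_grid _] k j; have [N ->] := q_grid k j; rewrite divr_ge0 // ltW. Qed.

Lemma valid_init_freqs m : (0 < r)%N -> K = m%:R * r%:R -> valid_freqs (@init_freqs R n r).
Proof.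
move=> r_gt0 KE; have r_neq0 : r%:R != 0 :> R by rewrite pnatr_eq0 -lt0n.
have m_neq0 : m%:R != 0 :> R by apply: contraTneq K_gt0 => m0; rewrite KE m0 mul0r ltxx.
split=> [k j|k].
  by exists m; rewrite /init_freqs KE; field; rewrite m_neq0 r_neq0.
by rewrite /init_freqs sumr_const card_ord -[_ *+ _]mulr_natr mulVf.
Qed.

Definition ranked (z : samples) := if f z.1 < f z.2 then (z.2, z.1) else z.

Lemma cga_stepE q z k j : cga_step f K q z k j =
  q k j + K^-1 * (((ranked z).1 k == j)%:R - ((ranked z).2 k == j)%:R).
Proof. by rewrite /cga_step /ranked; case: ifP; case: z. Qed.

Lemma pair_prob_ranked q z : pair_prob q (ranked z) = pair_prob q z.
Proof. by rewrite /ranked; case: ifP => // _; rewrite /pair_prob mulrC. Qed.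

Lemma sum_indicator (a : 'I_r) : \sum_j ((a == j)%:R : R) = 1.
Proof. by rewrite (bigD1 a) //= eqxx big1 ?addr0 // => j /negbTE; rewrite eq_sym => ->. Qed.

(* Only sampled values lose frequency, and these have frequency at least 1/K. *)
Lemma valid_freqs_step q z : valid_freqs q -> pair_prob q z != 0 ->
  valid_freqs (cga_step f K q z).
Proof.
move=> [q_grid q_sum1]; rewrite -pair_prob_ranked mulf_eq0 negb_or => /andP[_ loser_nz].
split=> [k j|k]; last first.
  under eq_bigr do rewrite cga_stepE.
  by rewrite big_split /= q_sum1 -mulr_sumr sumrB !sum_indicator subrr mulr0 addr0.
have [N qE] := q_grid k j; rewrite cga_stepE qE.
case: eqP => _; case: eqP => [loserE|_]; rewrite ?subrr ?mulr0 ?addr0; try by exists N.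
  by exists N.+1; rewrite subr0 mulr1 -natr1 mulrDl div1r.
move: (sample_prob_neq0 k loser_nz); rewrite loserE qE.
case: N {qE} => [|N]; first by rewrite mul0r eqxx.
by move=> _; exists N; rewrite sub0r mulrN1 -natr1 mulrDl div1r addrK.
Qed.

Hypothesis valid_init : valid_freqs (@init_freqs R n r).

Lemma run_prob_ge0_valid T (s : run T) :
  0 <= run_prob f K s /\ (run_prob f K s != 0 -> valid_freqs (cga_traj f K s T)).
Proof.
elim: T s => [|T IH] s; first by rewrite /run_prob big_ord0.
rewrite -(extend_restrict_run s) run_prob_extend cga_traj_extend_last.
have [P_ge0 P_valid] := IH (restrict_run s).
have [->|P_neq0] := eqVneq (run_prob f K (restrict_run s)) 0; first by rewrite mul0r eqxx.
have q_ge0 := valid_freqs_ge0 (P_valid P_neq0).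
split; first by rewrite mulr_ge0 ?pair_prob_ge0.
by rewrite mulf_eq0 negb_or => /andP[_]; apply: valid_freqs_step; apply: P_valid.
Qed.

Lemma run_prob_ge0 T (s : run T) : 0 <= run_prob f K s.
Proof. by case: (run_prob_ge0_valid s). Qed.

Lemma supermartingale_mean_le1 (V : forall T, run T -> R) :
  (forall s : run 0, V 0 s <= 1) ->
  (forall T (s : run T), run_prob f K s != 0 ->
     \sum_z pair_prob (cga_traj f K s T) z * V T.+1 (extend_run s z) <= V T s) ->
  forall T, \sum_(s : run T) run_prob f K s * V T s <= 1.
Proof.
move=> V0_le1 V_step; elim=> [|T IH].
  under eq_bigr do rewrite /run_prob big_ord0 mul1r.
  apply: le_trans (ler_sum _ (fun s _ => V0_le1 s)) _.
  by rewrite sumr_const card_ffun card_ord expn0.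
rewrite sum_run_succ (le_trans _ IH) // ler_sum // => s _.
under eq_bigr do rewrite run_prob_extend -mulrA.
rewrite -mulr_sumr.
have [->|P_neq0] := eqVneq (run_prob f K s) 0; first by rewrite !mul0r.
by rewrite ler_wpM2l ?run_prob_ge0 ?V_step.
Qed.

Lemma cga_Pr_markov T (E : pred (run T)) (V : run T -> R) b :
  (forall s, 0 <= V s) -> (forall s, E s -> b <= V s) ->
  cga_Pr f K E * b <= \sum_s run_prob f K s * V s.
Proof.
move=> V_ge0 V_ge_b; rewrite /cga_Pr mulr_suml [leRHS](bigID E) /=.
have rest_ge0 : 0 <= \sum_(s | ~~ E s) run_prob f K s * V s.
  by rewrite sumr_ge0 // => s _; rewrite mulr_ge0 ?run_prob_ge0.
rewrite -[leLHS]addr0 lerD // ler_sum // => s Es.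
by rewrite ler_wpM2l ?run_prob_ge0 ?V_ge_b.
Qed.

End Reachable.

Section Drift.
Variables (R : realType) (n r : nat) (f : point n r -> R) (i : 'I_n) (j : 'I_r).
Hypothesis pref_j : weak_pref f i j.
Local Notation samples := (point n r * point n r)%type.
Implicit Types (q : freqs R n r) (x : point n r).

Lemma setpos_at x v : setpos x i v i = v.
Proof. by rewrite ffunE eqxx. Qed.

Lemma setpos_id x : setpos x i (x i) = x.
Proof. by apply/ffunP => k; rewrite ffunE; case: eqP => // ->. Qed.

Lemma setpos_setpos x v w : setpos (setpos x i v) i w = setpos x i w.
Proof. by apply/ffunP => k; rewrite !ffunE; case: eqP. Qed.

Lemma sample_prob_setpos q x v :
  sample_prob q (setpos x i v) = q i v * \prod_(k | k != i) q k (x k).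
Proof.
rewrite /sample_prob (bigD1 i) //= setpos_at; congr (_ * _).
by apply: eq_bigr => k /negbTE k_neq_i; rewrite ffunE k_neq_i.
Qed.

Definition swap_at (z : samples) : samples :=
  (setpos z.1 i (z.2 i), setpos z.2 i (z.1 i)).

Lemma swap_atK : involutive swap_at.
Proof. by move=> [x y]; rewrite /swap_at /= !setpos_at !setpos_setpos !setpos_id. Qed.

Lemma pair_prob_swap_at q z : pair_prob q (swap_at z) = pair_prob q z.
Proof.
case: z => x y; rewrite /pair_prob /= !sample_prob_setpos.
by rewrite -{3}(setpos_id x) -{3}(setpos_id y) !sample_prob_setpos; ring.
Qed.

Definition gain (z : samples) : R :=
  ((ranked f z).1 i == j)%:R - ((ranked f z).2 i == j)%:R.

(* A step losing frequency of [j] is paired by [swap_at] with one gaining it: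
   moving [j] to the winner can only make it win more. *)
Lemma gain_swap_at_ge0 z : 0 <= gain z + gain (swap_at z).
Proof.
case: z => x y; rewrite /gain /ranked /swap_at /=.
have setpos_le x' : x' i = j -> forall v, f (setpos x' i v) <= f x'.
  by move=> x'_j v; have := pref_j (setpos x' i v); rewrite setpos_setpos -x'_j setpos_id.
have le_setpos x' : f x' <= f (setpos x' i j) by exact: pref_j.
case: (eqVneq (x i) j) => [x_j|/negbTE x_nj]; case: (eqVneq (y i) j) => [y_j|/negbTE y_nj].
- by case: ifP => _; case: ifP => _; rewrite /= ?setpos_at x_j y_j eqxx subrr addr0.
- rewrite x_j; have := setpos_le x x_j (y i); have := le_setpos y.
  by case: ifP => c1; case: ifP => c2; rewrite /= ?setpos_at x_j y_nj ?eqxx /=; lra.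
- rewrite y_j; have := setpos_le y y_j (x i); have := le_setpos x.
  by case: ifP => c1; case: ifP => c2; rewrite /= ?setpos_at x_nj y_j ?eqxx /=; lra.
- by case: ifP => _; case: ifP => _; rewrite /= ?setpos_at x_nj y_nj subrr addr0.
Qed.

Lemma sum_gain_ge0 q : (forall k v, 0 <= q k v) ->
  0 <= \sum_(z : samples) pair_prob q z * gain z.
Proof.
move=> q_ge0.
have sum_swapE : \sum_(z : samples) pair_prob q z * gain z =
    \sum_(z : samples) pair_prob q z * gain (swap_at z).
  rewrite (reindex_inj (inv_inj swap_atK)) /=.
  by apply: eq_bigr => z _; rewrite pair_prob_swap_at.
have : 0 <= \sum_(z : samples) pair_prob q z * (gain z + gain (swap_at z)).
  by rewrite sumr_ge0 // => z _; rewrite mulr_ge0 ?pair_prob_ge0 ?gain_swap_at_ge0.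
by under eq_bigr do rewrite mulrDr; rewrite big_split /= -sum_swapE; lra.
Qed.

Lemma sum_expR_gain_le q (x : R) : (forall k v, 0 <= q k v) -> (forall k, \sum_v q k v = 1) ->
  0 <= x -> \sum_(z : samples) pair_prob q z * expR (- (x * gain z)) <= expR (x ^+ 2 / 2).
Proof.
move=> q_ge0 q_sum1 x_ge0; apply: le_trans (cosh_le_expR_sqr x).
apply: (@le_trans _ _ (\sum_(z : samples) pair_prob q z * (cosh x - gain z * sinh x))).
  by apply: ler_sum => z _; rewrite ler_wpM2l ?pair_prob_ge0 ?expR_sign_le.
under eq_bigr do rewrite mulrBr (mulrA _ (gain _)).
rewrite sumrB -!mulr_suml sum_pair_prob // mul1r gerBl.
by rewrite mulr_ge0 ?sum_gain_ge0 ?sinh_ge0.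
Qed.

End Drift.

Lemma exists_ord_recr t (P : nat -> bool) :
  [exists k : 'I_t.+2, P k] = [exists k : 'I_t.+1, P k] || P t.+1.
Proof.
apply/existsP/orP => [[k Pk]|[/existsP[k Pk]|Pt]].
- case: (ltnP k t.+1) => [lt_kt|le_tk]; first by left; apply/existsP; exists (Ordinal lt_kt).
  by right; have -> : t.+1 = k by apply/eqP; rewrite eqn_leq le_tk -ltnS ltn_ord.
- by exists (widen_ord (leqnSn _) k).
- by exists ord_max.
Qed.

Section Drop.
Variables (R : realType) (n r : nat) (K : R) (f : point n r -> R) (i : 'I_n) (j : 'I_r).
Hypotheses (K_gt0 : 0 < K) (pref_j : weak_pref f i j).
Hypothesis valid_init : valid_freqs K (@init_freqs R n r).
Variables (a lam : R).
Hypotheses (a_gt0 : 0 < a) (lam_ge0 : 0 <= lam).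
Local Notation samples := (point n r * point n r)%type.
Local Notation run T := {ffun 'I_T -> samples}.
Implicit Types q : freqs R n r.

Definition drops_by T (s : run T) t :=
  [exists k : 'I_t.+1, cga_traj f K s k i j <= @init_freqs R n r i j - a].

Lemma drops_by_extend T (s : run T) z t : (t <= T)%N ->
  drops_by (extend_run s z) t = drops_by s t.
Proof.
move=> le_tT; apply: eq_existsb => k; rewrite cga_traj_extend //.
by rewrite (leq_trans _ le_tT) // -ltnS.
Qed.

Lemma drops_by_extend_last T (s : run T) z :
  drops_by (extend_run s z) T.+1 =
  drops_by s T || (cga_step f K (cga_traj f K s T) z i j <= @init_freqs R n r i j - a).
Proof.
rewrite /drops_by (exists_ord_recr T (fun t => cga_traj f K _ t i j <= _)).
by rewrite -/(drops_by _ T) drops_by_extend // cga_traj_extend_last.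
Qed.

Lemma drops_by0 (s : run 0) : drops_by s 0 = false.
Proof.
by apply/existsP => -[k]; rewrite ord1 /= /init_freqs lerBrDr gerDl leNgt a_gt0.
Qed.

Definition potential q := expR (lam * (@init_freqs R n r i j - q i j)).

Definition step_factor := expR ((lam / K) ^+ 2 / 2).

Lemma step_factor_ge1 : 1 <= step_factor.
Proof. by rewrite -expR0 ler_expR divr_ge0 ?sqr_ge0. Qed.

Lemma sum_potential_step_le q : valid_freqs K q ->
  \sum_(z : samples) pair_prob q z * potential (cga_step f K q z) <= step_factor * potential q.
Proof.
move=> q_valid; have [_ q_sum1] := q_valid.
have potential_step z :
    potential (cga_step f K q z) = potential q * expR (- (lam / K * gain f i j z)).
  by rewrite /potential -expRD cga_stepE /gain; congr expR; ring.
under eq_bigr do rewrite potential_step mulrCA.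
have q_ge0 := valid_freqs_ge0 K_gt0 q_valid.
by rewrite -mulr_sumr mulrC ler_wpM2r ?expR_ge0 // sum_expR_gain_le // divr_ge0 // ltW.
Qed.

(* Freezing the potential at its floor [expR (lam * a)] once the drop has happened
   keeps it a supermartingale. *)
Definition stopped_potential T (s : run T) :=
  if drops_by s T then expR (lam * a) else potential (cga_traj f K s T).

Lemma sum_stopped_potential_le T (s : run T) : run_prob f K s != 0 ->
  \sum_(z : samples) pair_prob (cga_traj f K s T) z * stopped_potential (extend_run s z)
  <= step_factor * stopped_potential s.
Proof.
move=> P_neq0; have [_ /(_ P_neq0) q_valid] := run_prob_ge0_valid f K_gt0 valid_init s.
have [_ q_sum1] := q_valid; have q_ge0 := valid_freqs_ge0 K_gt0 q_valid.
rewrite /stopped_potential.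
under eq_bigr do rewrite drops_by_extend_last cga_traj_extend_last.
case: (drops_by s T) => /=.
  by rewrite -mulr_suml sum_pair_prob // mul1r ler_peMl ?expR_ge0 ?step_factor_ge1.
apply: le_trans (sum_potential_step_le q_valid).
apply: ler_sum => z _; rewrite ler_wpM2l ?pair_prob_ge0 //.
case: ifP => // dropped; rewrite ler_expR ler_wpM2l //; lra.
Qed.

Lemma cga_Pr_drops_by_le T :
  cga_Pr f K (fun s : run T => drops_by s T) <= expR (T%:R * ((lam / K) ^+ 2 / 2) - lam * a).
Proof.
pose V t (s : run t) := stopped_potential s / step_factor ^+ t.
have factor_gt0 : 0 < step_factor by exact: expR_gt0.
have V_le1 : \sum_(s : run T) run_prob f K s * V T s <= 1.
  apply: (supermartingale_mean_le1 K_gt0 valid_init) => [s|{}T s P_neq0].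
    by rewrite /V /stopped_potential drops_by0 /potential /= subrr mulr0 expR0 expr0 divr1.
  rewrite /V; under eq_bigr do rewrite mulrA.
  rewrite -mulr_suml ler_pdivrMr ?exprn_gt0 // exprS mulrCA divfK ?expf_neq0 ?lt0r_neq0 //.
  exact: sum_stopped_potential_le.
have Pr_mul_le1 : cga_Pr f K (fun s : run T => drops_by s T) *
    (expR (lam * a) / step_factor ^+ T) <= 1.
  apply: le_trans V_le1; apply: (cga_Pr_markov f K_gt0 valid_init) => s.
    rewrite /V divr_ge0 ?exprn_ge0 ?(ltW factor_gt0) // /stopped_potential.
    by case: ifP => _; exact: expR_ge0.
  by rewrite /V /stopped_potential => ->.
rewrite expRB expRM_natl -/step_factor -invf_div -div1r ler_pdivlMr //.
by rewrite divr_gt0 ?expR_gt0 ?exprn_gt0.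
Qed.

End Drop.

Theorem theorem4 (R : realType) (n r : nat) (K : R)
    (f : point n r -> R) (i : 'I_n) (jtop : 'I_r) (T : nat) :
  (2 <= r)%N -> 0 < K ->
  (exists m : nat, K = m%:R * r%:R) ->
  val jtop = r.-1 ->
  weak_pref f i jtop ->
  cga_Pr f K
    (fun s : {ffun 'I_T -> point n r * point n r} =>
       [exists t : 'I_T.+1,
          cga_traj f K s t i jtop
            <= @init_freqs R n r i jtop - (2 * r%:R)^-1])
  <= 2 * expR (- (K ^+ 2 / (8 * T%:R * r%:R ^+ 2))).
Proof.
(* Only the weak preference for [jtop] matters, not [jtop] being the largest value. *)
move=> r_ge2 K_gt0 [m KE] _ pref_top.
have r_gt0 : (0 < r)%N by exact: leq_trans r_ge2.
have r_neq0 : r%:R != 0 :> R by rewrite pnatr_eq0 -lt0n.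
set a : R := (2 * r%:R)^-1.
have a_gt0 : 0 < a by rewrite invr_gt0 mulr_gt0 ?ltr0n.
set lam : R := a * K ^+ 2 / T%:R.
have lam_ge0 : 0 <= lam by rewrite /lam divr_ge0 // mulr_ge0 ?sqr_ge0 // ltW.
have exponentE :
    T%:R * ((lam / K) ^+ 2 / 2) - lam * a = - (K ^+ 2 / (8 * T%:R * r%:R ^+ 2)).
  rewrite /lam /a; have [->|T_gt0] := posnP T.
    by rewrite !(mulr0n, mul0r, invr0, mulr0, subr0, oppr0).
  have T_neq0 : T%:R != 0 :> R by rewrite pnatr_eq0 -lt0n.
  by field; rewrite ?T_neq0 ?r_neq0 ?(gt_eqF K_gt0).
have := cga_Pr_drops_by_le K_gt0 pref_top (valid_init_freqs n K_gt0 r_gt0 KE) a_gt0 lam_ge0 T.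
rewrite exponentE => /le_trans; apply.
by have := expR_ge0 (- (K ^+ 2 / (8 * T%:R * r%:R ^+ 2))); lra.
Qed.
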